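(* Fix $z$ in a sufficiently small neighborhood of $\tfrac12$. Then $$\widehat\psi(\zeta,1-z)=-\widehat\varphi(\zeta,z).$$
   Context: For a parameter $t$ near $\frac12$: $Q(w)=w(w-1)(w-t)$, $w_\pm(t)=\frac13(t+1)\pm\frac13(t^2-t+1)^{1/2}$ (principal root), $Q_\pm(t)=Q(w_\pm(t))$. With $u(t)=\frac{3t-(t+1)^2}{3}$, $v(Q,t)=\frac1{27}\big(-2(t+1)^3+9t(t+1)-27Q\big)$, principal branches, $w_k(Q,t)=\frac{t+1}{3}+2\left(-\frac u3\right)^{1/2}\cos\!\Big(\frac13\arccos\Big(\frac{3v}{2u}\big(-\frac3u\big)^{1/2}\Big)+\theta_k\Big)$, $\theta_0=\frac{2\pi}3,\theta_1=0,\theta_2=-\frac{2\pi}3$. $\Psi(Q,t)=Q\frac{2w_1-w_0-w_2}{(w_0-w_1)(w_0-w_2)(w_1-w_2)}$, $\Phi(Q,t)=Q\frac{w_1+w_2-2w_0}{(w_0-w_1)(w_0-w_2)(w_1-w_2)}$ with $w_k=w_k(Q,t)$; $\widehat\psi(\zeta,t)=\Psi(Q_-(t)e^{-\zeta},t)$, $\widehat\varphi(\zeta,t)=\Phi(Q_+(t)e^{-\zeta},t)$. *)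

From Stdlib Require Import Reals.
From Coquelicot Require Import Coquelicot.
Open Scope R_scope.

(* Principal argument, with values in (-PI, PI]; Carg 0 = 0 (irrelevant). *)
Definition Carg (z : C) : R :=
  let x := Re z in let y := Im z in
  if Rlt_dec 0 x then atan (y / x)
  else if Rlt_dec x 0 then
    (if Rle_dec 0 y then atan (y / x) + PI else atan (y / x) - PI)
  else (if Rlt_dec 0 y then PI / 2
        else if Rlt_dec y 0 then - (PI / 2) else 0).

Definition Cexp (z : C) : C :=
  (exp (Re z) * cos (Im z), exp (Re z) * sin (Im z)).

(* Principal logarithm (Log 0 := ln 0 arbitrary, never used meaningfully). *)
Definition Clog (z : C) : C := (ln (Cmod z), Carg z).

Definition Csqrt (z : C) : C :=
  if Req_EM_T (Cmod z) 0 then 0%C else Cexp (Clog z / 2)%C.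

Definition Ccos (z : C) : C :=
  ((Cexp (Ci * z) + Cexp (- (Ci * z))) / 2)%C.

(* Principal inverse sine and cosine (DLMF 4.23.19, 4.23.22):
   arcsin z = -i Log( (1-z^2)^{1/2} + i z ),  arccos z = pi/2 - arcsin z. *)
Definition Carcsin (z : C) : C :=
  (- Ci * Clog (Csqrt (1 - z * z) + Ci * z))%C.
Definition Carccos (z : C) : C := (RtoC (PI / 2) - Carcsin z)%C.

Definition Qpoly (t w : C) : C := (w * (w - 1) * (w - t))%C.

Definition wplus (t : C) : C :=
  ((t + 1) / 3 + / 3 * Csqrt (t * t - t + 1))%C.
Definition wminus (t : C) : C :=
  ((t + 1) / 3 - / 3 * Csqrt (t * t - t + 1))%C.

Definition Qplus (t : C) : C := Qpoly t (wplus t).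
Definition Qminus (t : C) : C := Qpoly t (wminus t).

Definition u_of (t : C) : C := ((3 * t - (t + 1) * (t + 1)) / 3)%C.
Definition v_of (Q t : C) : C :=
  (/ 27 * (- 2 * ((t + 1) * (t + 1) * (t + 1)) + 9 * t * (t + 1) - 27 * Q))%C.

Definition theta (k : nat) : R :=
  match k with
  | 0%nat => 2 * PI / 3
  | 1%nat => 0
  | _ => - (2 * PI / 3)
  end.

Definition wk (k : nat) (Q t : C) : C :=
  let u := u_of t in let v := v_of Q t in
  ((t + 1) / 3 + 2 * Csqrt (- u / 3) *
     Ccos (/ 3 * Carccos (3 * v / (2 * u) * Csqrt (- 3 / u)) + RtoC (theta k)))%C.

Definition Psi (Q t : C) : C :=
  let w0 := wk 0 Q t in let w1 := wk 1 Q t in let w2 := wk 2 Q t in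
  (Q * (2 * w1 - w0 - w2) / ((w0 - w1) * (w0 - w2) * (w1 - w2)))%C.

Definition Phi (Q t : C) : C :=
  let w0 := wk 0 Q t in let w1 := wk 1 Q t in let w2 := wk 2 Q t in
  (Q * (w1 + w2 - 2 * w0) / ((w0 - w1) * (w0 - w2) * (w1 - w2)))%C.

Definition psihat (zeta t : C) : C := Psi (Qminus t * Cexp (- zeta))%C t.
Definition phihat (zeta t : C) : C := Phi (Qplus t * Cexp (- zeta))%C t.

(* Under t -> 1 - t the parameter u is unchanged, while v changes sign together
   with Q.  The principal arcsin is odd, so arccos (-X) = PI - arccos X, and
   cos ((PI - A)/3 + theta_k) = - cos (A/3 + theta_j) whenever
   theta_k + theta_j + PI/3 = +-PI, i.e. for (k, j) = (0, 1), (1, 0), (2, 2).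
   Hence w_k(-Q, 1 - t) = 1 - w_j(Q, t): the reflection exchanges the roots w_0
   and w_1 and fixes w_2.  Together with Q_-(1 - t) = - Q_+(t), which holds
   because t^2 - t + 1 is invariant, this turns Psi(-Q, 1 - t) into - Phi(Q, t).
   The identity holds for every z, not only near 1/2. *)

From Stdlib Require Import Reals Lra.
From Coquelicot Require Import Coquelicot.
Open Scope R_scope.

Lemma atan_nonneg (x : R) : 0 <= x -> 0 <= atan x.
Proof.
  intros [Hx | <-]; [| rewrite atan_0; lra].
  rewrite <- atan_0; left; apply atan_increasing; exact Hx.
Qed.

Lemma atan_nonpos (x : R) : x <= 0 -> atan x <= 0.
Proof.
  intros Hx. rewrite <- (Ropp_involutive x), atan_opp.
  pose proof (atan_nonneg (- x)); lra.
Qed.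

Lemma Carg_bound (w : C) : - PI <= Carg w <= PI.
Proof.
  destruct w as [x y]; unfold Carg, Re, Im; cbn [fst snd].
  pose proof PI_RGT_0; pose proof (atan_bound (y / x)).
  destruct (Rlt_dec 0 x); [lra |].
  destruct (Rlt_dec x 0) as [Hx |].
  - assert (Hinv : / x < 0) by (apply Rinv_lt_0_compat; exact Hx).
    destruct (Rle_dec 0 y).
    + assert (atan (y / x) <= 0) by (apply atan_nonpos; unfold Rdiv; nra). lra.
    + assert (0 <= atan (y / x)) by (apply atan_nonneg; unfold Rdiv; nra). lra.
  - destruct (Rlt_dec 0 y); [lra |]. destruct (Rlt_dec y 0); lra.
Qed.

Lemma Cmod_factor (x y : R) : x <> 0 ->
  Cmod (x, y) = Rabs x * sqrt (1 + (y / x)²).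
Proof.
  intros Hx. unfold Cmod; cbn [fst snd].
  rewrite <- sqrt_Rsqr_abs, <- sqrt_mult_alt by apply Rle_0_sqr.
  f_equal. unfold Rsqr. field. exact Hx.
Qed.

Lemma Cmod_polar (w : C) : w <> 0%C ->
  Cmod w * cos (Carg w) = Re w /\ Cmod w * sin (Carg w) = Im w.
Proof.
  intros Hw. destruct w as [x y]; unfold Carg, Re, Im; cbn [fst snd].
  destruct (Rlt_dec 0 x); [| destruct (Rlt_dec x 0)].
  - rewrite Cmod_factor, Rabs_right, cos_atan, sin_atan by lra.
    assert (0 < sqrt (1 + (y / x)²))
      by (apply sqrt_lt_R0; pose proof (Rle_0_sqr (y / x)); lra).
    split; field; lra.
  - rewrite Cmod_factor, Rabs_left by lra.
    assert (0 < sqrt (1 + (y / x)²))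
      by (apply sqrt_lt_R0; pose proof (Rle_0_sqr (y / x)); lra).
    destruct (Rle_dec 0 y).
    + rewrite neg_cos, neg_sin, cos_atan, sin_atan. split; field; lra.
    + rewrite cos_minus, sin_minus, cos_PI, sin_PI, cos_atan, sin_atan.
      split; field; lra.
  - assert (x = 0) by lra; subst x.
    replace (Cmod (0, y)) with (Rabs y)
      by (unfold Cmod; cbn [fst snd]; rewrite <- sqrt_Rsqr_abs; f_equal;
          unfold Rsqr; ring).
    destruct (Rlt_dec 0 y); [| destruct (Rlt_dec y 0)].
    + rewrite cos_PI2, sin_PI2, Rabs_right by lra. split; ring.
    + rewrite cos_neg, sin_neg, cos_PI2, sin_PI2, Rabs_left by lra. split; ring.
    + exfalso; apply Hw, injective_projections; simpl; lra.
Qed.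

Lemma Cexp_add (a b : C) : Cexp (a + b) = (Cexp a * Cexp b)%C.
Proof.
  destruct a as [a1 a2], b as [b1 b2]; unfold Cexp, Re, Im; simpl.
  rewrite exp_plus, cos_plus, sin_plus.
  apply injective_projections; simpl; ring.
Qed.

Lemma Cexp_Clog (w : C) : w <> 0%C -> Cexp (Clog w) = w.
Proof.
  intros Hw. destruct (Cmod_polar w Hw) as [Hre Him].
  unfold Cexp, Clog, Re, Im in *; cbn [fst snd] in *.
  rewrite exp_ln by (apply Cmod_gt_0; exact Hw).
  rewrite Hre, Him. destruct w; reflexivity.
Qed.

Lemma Csqrt_mul_self (w : C) : (Csqrt w * Csqrt w)%C = w.
Proof.
  unfold Csqrt. destruct (Req_EM_T (Cmod w) 0) as [E | E].
  - apply Cmod_eq_0 in E; subst w. ring.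
  - assert (w <> 0%C) by (intros ->; apply E, Cmod_0).
    rewrite <- Cexp_add, <- Cexp_Clog by assumption.
    f_equal. field.
Qed.

(* The principal square root lies in the closed right half-plane, since
   [Carg w / 2] lies in [[-PI/2, PI/2]]. *)
Lemma Csqrt_Re_nonneg (w : C) : 0 <= Re (Csqrt w).
Proof.
  unfold Csqrt. destruct (Req_EM_T (Cmod w) 0); [simpl; lra |].
  replace (Clog w / 2)%C with (ln (Cmod w) / 2, Carg w / 2)
    by (apply injective_projections; simpl; field).
  unfold Cexp, Re, Im; cbn [fst snd].
  pose proof (Carg_bound w).
  apply Rmult_le_pos; [left; apply exp_pos | apply cos_ge_0; lra].
Qed.

Lemma Carg_conj_scal (x y k : R) : 0 < k -> ~ (y = 0 /\ x < 0) ->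
  Carg (x * k, - y * k) = - Carg (x, y).
Proof.
  intros Hk Hneg. unfold Carg, Re, Im; cbn [fst snd].
  destruct (Rlt_dec 0 (x * k)); destruct (Rlt_dec 0 x); try (exfalso; nra).
  - replace (- y * k / (x * k)) with (- (y / x)) by (field; lra).
    rewrite atan_opp; ring.
  - destruct (Rlt_dec (x * k) 0); destruct (Rlt_dec x 0); try (exfalso; nra).
    + replace (- y * k / (x * k)) with (- (y / x)) by (field; lra).
      rewrite atan_opp.
      destruct (Rle_dec 0 (- y * k)); destruct (Rle_dec 0 y);
        try (exfalso; nra); ring.
    + destruct (Rlt_dec 0 (- y * k)); destruct (Rlt_dec 0 y);
        try (exfalso; nra); try ring;
      destruct (Rlt_dec (- y * k) 0); destruct (Rlt_dec y 0);
        try (exfalso; nra); ring.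
Qed.

Lemma Clog_Cinv (a : C) : a <> 0%C -> ~ (Im a = 0 /\ Re a < 0) ->
  Clog (/ a) = (- Clog a)%C.
Proof.
  intros Ha Hneg. unfold Clog.
  rewrite Cmod_inv by exact Ha.
  rewrite ln_Rinv by (apply Cmod_gt_0; exact Ha).
  destruct a as [x y]; unfold Re, Im in Hneg; cbn [fst snd] in Hneg.
  assert (Hn : 0 < x ^ 2 + y ^ 2).
  { destruct (Req_dec x 0) as [-> | Hx]; [| nra].
    destruct (Req_dec y 0) as [-> | Hy]; [| nra].
    exfalso; apply Ha; reflexivity. }
  unfold Cinv, Rdiv; cbn [fst snd].
  rewrite Carg_conj_scal by (try apply Rinv_0_lt_compat; tauto).
  apply injective_projections; simpl; ring.
Qed.

(* [a = s + i X] and [b = s - i X] satisfy [a b = 1] and [a + b = 2 s] with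
   [Re s >= 0]; so [a] is not a negative real and [b = 1 / a] has [Log b = - Log a]. *)
Lemma Carcsin_opp (X : C) : Carcsin (- X) = (- Carcsin X)%C.
Proof.
  unfold Carcsin. replace (1 - - X * - X)%C with (1 - X * X)%C by ring.
  set (s := Csqrt (1 - X * X)).
  assert (Hss : (s * s)%C = (1 - X * X)%C) by apply Csqrt_mul_self.
  assert (Hre : 0 <= Re s) by apply Csqrt_Re_nonneg.
  set (a := (s + Ci * X)%C).
  assert (Hab : (a * (s + Ci * - X))%C = 1).
  { replace (a * (s + Ci * - X))%C with (s * s + X * X)%C
      by (unfold a; apply injective_projections; simpl; ring).
    rewrite Hss; ring. }
  assert (Ha : a <> 0%C) by (intros E; rewrite E, Cmult_0_l in Hab;
                             apply (f_equal fst) in Hab; simpl in Hab; lra).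
  replace (s + Ci * - X)%C with (/ a)%C
    by (rewrite <- (Cmult_1_l (/ a)), <- Hab; field; exact Ha).
  assert (Ha_notneg : ~ (Im a = 0 /\ Re a < 0)).
  { intros [Him Hre_a].
    replace (s + Ci * - X)%C with (2 * s - a)%C in Hab by (unfold a; ring).
    destruct a as [p q], s as [s1 s2]; unfold Re, Im in *; cbn [fst snd] in *.
    subst q; apply (f_equal fst) in Hab; simpl in Hab; nra. }
  rewrite Clog_Cinv by assumption.
  ring.
Qed.

Lemma Carccos_opp (X : C) : Carccos (- X) = (RtoC PI - Carccos X)%C.
Proof.
  unfold Carccos. rewrite Carcsin_opp.
  apply injective_projections; simpl; field.
Qed.

Lemma Ccos_opp (w : C) : Ccos (- w) = Ccos w.
Proof.
  unfold Ccos. replace (- (Ci * - w))%C with (Ci * w)%C by ring.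
  replace (Ci * - w)%C with (- (Ci * w))%C by ring.
  rewrite Cplus_comm. reflexivity.
Qed.

Lemma Cexp_i_mul (r : R) : Cexp (Ci * RtoC r) = (cos r, sin r).
Proof.
  replace (Ci * RtoC r)%C with (0, r) by (apply injective_projections; simpl; ring).
  unfold Cexp, Re, Im; cbn [fst snd].
  rewrite exp_0, !Rmult_1_l. reflexivity.
Qed.

Lemma Ccos_add_PI (w : C) : Ccos (w + RtoC PI) = (- Ccos w)%C.
Proof.
  unfold Ccos.
  replace (- (Ci * (w + RtoC PI)))%C with (- (Ci * w) + Ci * RtoC (- PI))%C
    by (apply injective_projections; simpl; ring).
  replace (Ci * (w + RtoC PI))%C with (Ci * w + Ci * RtoC PI)%C by ring.
  rewrite !Cexp_add, !Cexp_i_mul, cos_neg, sin_neg, cos_PI, sin_PI.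
  apply injective_projections; simpl; field.
Qed.

Lemma Ccos_sub_PI (w : C) : Ccos (w - RtoC PI) = (- Ccos w)%C.
Proof.
  pose proof (Ccos_add_PI (w - RtoC PI)) as Hshift.
  replace (w - RtoC PI + RtoC PI)%C with w in Hshift by ring.
  rewrite Hshift; ring.
Qed.

Lemma Ccos_third_reflect (A : C) (a b : R) :
  a + b + PI / 3 = PI \/ a + b + PI / 3 = - PI ->
  Ccos (/ 3 * (RtoC PI - A) + RtoC a) = (- Ccos (/ 3 * A + RtoC b))%C.
Proof.
  rewrite <- Ccos_opp.
  intros [Hab | Hab]; [rewrite <- Ccos_sub_PI | rewrite <- Ccos_add_PI];
    f_equal; apply injective_projections; simpl; field_simplify; lra.
Qed.

Lemma u_of_reflect (t : C) : u_of (1 - t) = u_of t.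
Proof. unfold u_of; field. Qed.

Lemma v_of_reflect (Q t : C) : v_of (- Q) (1 - t) = (- v_of Q t)%C.
Proof. unfold v_of; field. Qed.

Lemma wk_reflect (k j : nat) (Q t : C) :
  theta k + theta j + PI / 3 = PI \/ theta k + theta j + PI / 3 = - PI ->
  wk k (- Q) (1 - t) = (1 - wk j Q t)%C.
Proof.
  intros Hkj. unfold wk; cbv zeta.
  rewrite u_of_reflect, v_of_reflect.
  replace (3 * - v_of Q t / (2 * u_of t) * Csqrt (- 3 / u_of t))%C
    with (- (3 * v_of Q t / (2 * u_of t) * Csqrt (- 3 / u_of t)))%C
    by (unfold Cdiv; ring).
  rewrite Carccos_opp, (Ccos_third_reflect _ _ _ Hkj).
  field.
Qed.

Lemma Qminus_reflect (t : C) : Qminus (1 - t) = (- Qplus t)%C.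
Proof.
  unfold Qminus, Qplus, wminus, wplus, Qpoly.
  replace ((1 - t) * (1 - t) - (1 - t) + 1)%C with (t * t - t + 1)%C by ring.
  field.
Qed.

Theorem proposition3p8 :
  exists eps : R, (0 < eps)%R /\
    forall z : C, (Cmod (z - RtoC (1 / 2)) < eps)%R ->
      forall zeta : C, psihat zeta (1 - z)%C = (- phihat zeta z)%C.
Proof.
  exists 1. split; [lra |]. intros z _ zeta.
  unfold psihat, phihat. rewrite Qminus_reflect.
  set (Q := (Qplus z * Cexp (- zeta))%C).
  replace (- Qplus z * Cexp (- zeta))%C with (- Q)%C by (unfold Q; ring).
  unfold Psi, Phi; cbv zeta.
  rewrite (wk_reflect 0 1), (wk_reflect 1 0), (wk_reflect 2 2)
    by (unfold theta; lra).
  set (w0 := wk 0 Q z). set (w1 := wk 1 Q z). set (w2 := wk 2 Q z).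
  replace ((1 - w1 - (1 - w0)) * (1 - w1 - (1 - w2)) * (1 - w0 - (1 - w2)))%C
    with ((w0 - w1) * (w0 - w2) * (w1 - w2))%C by ring.
  unfold Cdiv. ring.
Qed.
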